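(* Let $(M,\otimes,I,\lambda,a)$ be a monoidal category and let $C$ be an $M$-actegory. Regard $M$ as an $M$-actegory via $\odot_M=\otimes$. Then, as Tambara modules (i.e. up to isomorphism in the relevant hom-categories of $\mathit{Tamb}$, compatibly with strengths): (1) $R_I\cong L_I\cong M(-,=)$, where $R_I\in\mathit{Tamb}_{M,M}$ and $L_I\in\mathit{Tamb}_{M,M}$ are formed from the unit object $I$ of $M$ regarded as an object of the $M$-actegory $M$, and $M(-,=)$ is the hom-profunctor of $M$; (2) for every $x\in C$ and $m\in M$, $R_x\otimes R_m\cong R_{m\odot_C x}$ in $\mathit{Tamb}_{C,M}$ (with $R_m\in\mathit{Tamb}_{M,M}$); (3) for every $x\in C$ and $m\in M$, $L_m\otimes L_x\cong L_{m\odot_C x}$ in $\mathit{Tamb}_{M,C}$ (with $L_m\in\mathit{Tamb}_{M,M}$).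
   Context: $(M,\otimes,I,\lambda,a)$ is a monoidal category ($\lambda$ left unitor, $a$ associator). An $M$-actegory is a category $C$ with a functor $\odot_C:M\times C\to C$ and natural isomorphisms $\lambda_x:I\odot_C x\to x$, $a_{m,n,x}:(m\otimes n)\odot_C x\to m\odot_C(n\odot_C x)$ satisfying the standard coherence axioms with the monoidal structure of $M$; $M$ is itself an $M$-actegory with $\odot_M=\otimes$. Composition is written in diagrammatic order $f;g$ ($f$ first). For $M$-actegories $C,D$, a Tambara module $P\in\mathit{Tamb}_{C,D}$ is a functor $P:C^{op}\times D\to\mathrm{Set}$ together with maps $\mathrm{st}_{m,c,d}:P(c,d)\to P(m\odot_C c,m\odot_D d)$ natural in $c,d$ and (di)natural in $m$, compatible with the unitors and associators of the actegories; morphisms are natural transformations commuting with the strengths. $\mathit{Tamb}$ is the bicategory whose objects are $M$-actegories, whose hom-categories are $\mathit{Tamb}_{C,D}$, whose identity 1-cell on $C$ is the hom-profunctor $C(-,=)$ (strength given by the action), and whose composition of $P\in\mathit{Tamb}_{C,D}$ and $Q\in\mathit{Tamb}_{D,E}$ is $(P\otimes Q)(c,e)=\int^{d\in D}P(c,d)\times Q(d,e)$ with the induced strength. For $x\in C$: $R_x\in\mathit{Tamb}_{C,M}$ is the profunctor $(c,n)\mapsto C(c,n\odot_C x)$ with strength sending $h:c\to n\odot x$ to $(m\odot h);a^{-1}_{m,n,x}:m\odot c\to (m\otimes n)\odot x$; $L_x\in\mathit{Tamb}_{M,C}$ is $(n,c)\mapsto C(n\odot_C x,c)$ with strength sending $h:n\odot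 x\to c$ to $a_{m,n,x};(m\odot h)$. *)

Set Implicit Arguments.

(* Categories; composition written in diagrammatic order  f ;; g  (f first). *)
Record Category := {
  ob :> Type;
  hom : ob -> ob -> Type;
  idm : forall a, hom a a;
  comp : forall a b e, hom a b -> hom b e -> hom a e;
  comp_idl : forall a b (f : hom a b), comp (idm a) f = f;
  comp_idr : forall a b (f : hom a b), comp f (idm b) = f;
  comp_assoc : forall a b e d (f : hom a b) (g : hom b e) (h : hom e d),
      comp (comp f g) h = comp f (comp g h) }.
Arguments hom {c} a b.
Arguments idm {c} a.
Arguments comp {c a b e} f g.
Notation "f ;; g" := (comp f g) (at level 40, left associativity).

Record Bifunctor (A B C : Category) := {
  fob :> A -> B -> C;
  fmap : forall a a' b b', hom a a' -> hom b b' -> hom (fob a b) (fob a' b');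
  fmap_id : forall a b, fmap _ _ _ _ (idm a) (idm b) = idm (fob a b);
  fmap_comp : forall a a' a'' b b' b'' (f : hom a a') (f' : hom a' a'')
      (g : hom b b') (g' : hom b' b''),
      fmap _ _ _ _ (f ;; f') (g ;; g') = fmap _ _ _ _ f g ;; fmap _ _ _ _ f' g' }.
Arguments fmap {A B C} F {a a' b b'} f g : rename.

Record MonCat := {
  mcat :> Category;
  tens : Bifunctor mcat mcat mcat;
  unitM : mcat;
  lam : forall x, hom (tens unitM x) x;
  lam_inv : forall x, hom x (tens unitM x);
  rho : forall x, hom (tens x unitM) x;
  rho_inv : forall x, hom x (tens x unitM);
  asc : forall x y z, hom (tens (tens x y) z) (tens x (tens y z));
  asc_inv : forall x y z, hom (tens x (tens y z)) (tens (tens x y) z);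
  lam_iso1 : forall x, lam x ;; lam_inv x = idm _;
  lam_iso2 : forall x, lam_inv x ;; lam x = idm _;
  rho_iso1 : forall x, rho x ;; rho_inv x = idm _;
  rho_iso2 : forall x, rho_inv x ;; rho x = idm _;
  asc_iso1 : forall x y z, asc x y z ;; asc_inv x y z = idm _;
  asc_iso2 : forall x y z, asc_inv x y z ;; asc x y z = idm _;
  lam_nat : forall x y (f : hom x y), fmap tens (idm unitM) f ;; lam y = lam x ;; f;
  rho_nat : forall x y (f : hom x y), fmap tens f (idm unitM) ;; rho y = rho x ;; f;
  asc_nat : forall x x' y y' z z' (f : hom x x') (g : hom y y') (h : hom z z'),
      fmap tens (fmap tens f g) h ;; asc x' y' z' = asc x y z ;; fmap tens f (fmap tens g h);
  pentagon : forall w x y z,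
      asc (tens w x) y z ;; asc w x (tens y z)
      = fmap tens (asc w x y) (idm z) ;; asc w (tens x y) z ;; fmap tens (idm w) (asc x y z);
  triangle : forall x y,
      asc x unitM y ;; fmap tens (idm x) (lam y) = fmap tens (rho x) (idm y);
  (* derivable (Kelly) but recorded for convenience *)
  triangle_l : forall x y,
      asc unitM x y ;; lam (tens x y) = fmap tens (lam x) (idm y) }.

Record ActData (M : MonCat) := {
  acat :> Category;
  act : Bifunctor M acat acat;
  aunit : forall x, hom (act (unitM M) x) x;
  aunit_inv : forall x, hom x (act (unitM M) x);
  aasc : forall (m n : M) x, hom (act (tens M m n) x) (act m (act n x));
  aasc_inv : forall (m n : M) x, hom (act m (act n x)) (act (tens M m n) x) }.
Arguments act {M} a.
Arguments aunit {M} a x.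
Arguments aunit_inv {M} a x.
Arguments aasc {M} a m n x.
Arguments aasc_inv {M} a m n x.

Definition IsActegory (M : MonCat) (C : ActData M) : Prop :=
  (forall x, aunit C x ;; aunit_inv C x = idm _) /\
  (forall x, aunit_inv C x ;; aunit C x = idm _) /\
  (forall m n x, aasc C m n x ;; aasc_inv C m n x = idm _) /\
  (forall m n x, aasc_inv C m n x ;; aasc C m n x = idm _) /\
  (forall (x y : C) (f : hom x y),
      fmap (act C) (idm (unitM M)) f ;; aunit C y = aunit C x ;; f) /\
  (forall (m m' n n' : M) (x x' : C) (f : hom m m') (g : hom n n') (h : hom x x'),
      fmap (act C) (fmap (tens M) f g) h ;; aasc C m' n' x'
      = aasc C m n x ;; fmap (act C) f (fmap (act C) g h)) /\
  (forall (m n p : M) (x : C),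
      aasc C (tens M m n) p x ;; aasc C m n (act C p x)
      = fmap (act C) (asc M m n p) (idm x) ;; aasc C m (tens M n p) x
        ;; fmap (act C) (idm m) (aasc C n p x)) /\
  (forall (m : M) (x : C),
      aasc C m (unitM M) x ;; fmap (act C) (idm m) (aunit C x)
      = fmap (act C) (rho M m) (idm x)) /\
  (forall (m : M) (x : C),
      aasc C (unitM M) m x ;; aunit C (act C m x)
      = fmap (act C) (lam M m) (idm x)).

Definition MAct (M : MonCat) : ActData M :=
  {| acat := M; act := tens M; aunit := lam M; aunit_inv := lam_inv M;
     aasc := asc M; aasc_inv := asc_inv M |}.

Record Tamb (M : MonCat) (C D : ActData M) := {
  prof :> C -> D -> Type;
  dimap : forall c c' d d', hom c' c -> hom d d' -> prof c d -> prof c' d';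
  st : forall (m : M) c d, prof c d -> prof (act C m c) (act D m d) }.
Arguments dimap {M C D} t {c c' d d'} f g p.
Arguments st {M C D} t m {c d} p.

Definition IsTamb (M : MonCat) (C D : ActData M) (P : Tamb C D) : Prop :=
  (forall c d (p : P c d), dimap P (idm c) (idm d) p = p) /\
  (forall c c1 c2 d d1 d2 (f1 : hom c1 c) (f2 : hom c2 c1) (g1 : hom d d1)
          (g2 : hom d1 d2) (p : P c d),
      dimap P (f2 ;; f1) (g1 ;; g2) p = dimap P f2 g2 (dimap P f1 g1 p)) /\
  (forall (m : M) c c' d d' (f : hom c' c) (g : hom d d') (p : P c d),
      st P m (dimap P f g p)
      = dimap P (fmap (act C) (idm m) f) (fmap (act D) (idm m) g) (st P m p)) /\
  (forall (m m' : M) (u : hom m m') c d (p : P c d),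
      dimap P (fmap (act C) u (idm c)) (idm _) (st P m' p)
      = dimap P (idm _) (fmap (act D) u (idm d)) (st P m p)) /\
  (forall c d (p : P c d),
      dimap P (aunit_inv C c) (aunit D d) (st P (unitM M) p) = p) /\
  (forall (m n : M) c d (p : P c d),
      dimap P (aasc_inv C m n c) (aasc D m n d) (st P (tens M m n) p)
      = st P m (st P n p)).

Definition TambIso (M : MonCat) (C D : ActData M) (P Q : Tamb C D) : Prop :=
  exists (al : forall c d, P c d -> Q c d) (be : forall c d, Q c d -> P c d),
    (forall c d (p : P c d), be c d (al c d p) = p) /\
    (forall c d (q : Q c d), al c d (be c d q) = q) /\
    (forall c c' d d' (f : hom c' c) (g : hom d d') (p : P c d),
        al c' d' (dimap P f g p) = dimap Q f g (al c d p)) /\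
    (forall (m : M) c d (p : P c d),
        al _ _ (st P m p) = st Q m (al c d p)).

(* R is (isomorphic, as a Tambara module, to) the composite P (x) Q, i.e. the
   coend  (c,e) |-> \int^d P(c,d) x Q(d,e)  with its induced profunctor action
   and strength: phi is a cowedge natural in c,e, compatible with strengths,
   and universal in each component (the defining property of the coend). *)
Definition TambComposite (M : MonCat) (C D E : ActData M)
    (P : Tamb C D) (Q : Tamb D E) (R : Tamb C E)
    (phi : forall c d e, P c d -> Q d e -> R c e) : Prop :=
  (forall c c' d e e' (f : hom c' c) (g : hom e e') (p : P c d) (q : Q d e),
      phi c' d e' (dimap P f (idm d) p) (dimap Q (idm d) g q)
      = dimap R f g (phi c d e p q)) /\
  (forall c d d' e (h : hom d d') (p : P c d) (q : Q d' e),
      phi c d' e (dimap P (idm c) h p) q = phi c d e p (dimap Q h (idm e) q)) /\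
  (forall (m : M) c d e (p : P c d) (q : Q d e),
      phi _ _ _ (st P m p) (st Q m q) = st R m (phi c d e p q)) /\
  (forall c e (X : Type) (g : forall d, P c d -> Q d e -> X),
      (forall d d' (h : hom d d') (p : P c d) (q : Q d' e),
          g d' (dimap P (idm c) h p) q = g d p (dimap Q h (idm e) q)) ->
      exists k : R c e -> X,
        (forall d (p : P c d) (q : Q d e), k (phi c d e p q) = g d p q) /\
        (forall k' : R c e -> X,
            (forall d (p : P c d) (q : Q d e), k' (phi c d e p q) = g d p q) ->
            forall r, k' r = k r)).

Definition TambCompIso (M : MonCat) (C D E : ActData M)
    (P : Tamb C D) (Q : Tamb D E) (R : Tamb C E) : Prop :=
  exists phi, TambComposite P Q R phi.

Definition HomT (M : MonCat) (C : ActData M) : Tamb C C :=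
  {| prof := fun c d => hom c d;
     dimap := fun c c' d d' f g h => f ;; h ;; g;
     st := fun m c d h => fmap (act C) (idm m) h |}.

Definition RT (M : MonCat) (C : ActData M) (x : C) : Tamb C (MAct M) :=
  {| prof := fun (c : C) (n : MAct M) => hom c (act C n x);
     dimap := fun c c' n n' f g h => f ;; h ;; fmap (act C) g (idm x);
     st := fun m c n h => fmap (act C) (idm m) h ;; aasc_inv C m n x |}.

Definition LT (M : MonCat) (C : ActData M) (x : C) : Tamb (MAct M) C :=
  {| prof := fun (n : MAct M) (c : C) => hom (act C n x) c;
     dimap := fun n n' c c' f g h => fmap (act C) f (idm x) ;; h ;; g;
     st := fun m n c h => aasc C m n x ;; fmap (act C) (idm m) h |}.

From Corelib Require Import ssreflect.
Set Implicit Arguments.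

Arguments comp_assoc {c a b e d} f g h.

(* (1) The right unitor identifies M(c, d (x) I) and M(d (x) I, c) with
   M(c, d); it respects the strengths because of Kelly's identity
   asc m n I ;; (m (x) rho n) = rho (m (x) n).
   (2), (3) are co-Yoneda: in the coend of C(c, d . x) x M(d, e (x) m) every
   pair (p, q) is identified with (p ;; q . x, id), so the coend is
   C(c, (e (x) m) . x), which the actegory associator identifies with
   C(c, e . (m . x)); the pentagon axiom of the actegory makes this compatible
   with the strengths.  (3) is the dual argument. *)

Lemma iso_square_inv {K : Category} {a b c d : K} {i : hom b a} {i' : hom a b}
    {j : hom c d} {j' : hom d c} {f : hom b c} {g : hom a d} :
  i' ;; i = idm a -> j ;; j' = idm c -> f ;; j = i ;; g -> i' ;; f = g ;; j'.
Proof.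
move=> ii' jj' fg.
by rewrite -[LHS]comp_idr -jj' -comp_assoc (comp_assoc i') fg -comp_assoc ii' comp_idl.
Qed.

Section BifunctorLemmas.
Variables (A B K : Category) (F : Bifunctor A B K).

Lemma fmap_compl a a' a'' b (f : hom a a') (f' : hom a' a'') :
  fmap F (f ;; f') (idm b) = fmap F f (idm b) ;; fmap F f' (idm b).
Proof. by rewrite -fmap_comp comp_idl. Qed.

Lemma fmap_compr a b b' b'' (g : hom b b') (g' : hom b' b'') :
  fmap F (idm a) (g ;; g') = fmap F (idm a) g ;; fmap F (idm a) g'.
Proof. by rewrite -fmap_comp comp_idl. Qed.

End BifunctorLemmas.

Section MonoidalLemmas.
Variable M : MonCat.
Notation T := (tens M).
Notation I := (unitM M).

Lemma tens_unit_inj (a b : M) (f g : hom a b) :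
  fmap T f (idm I) = fmap T g (idm I) -> f = g.
Proof.
have conj_rho (h : hom a b) : h = rho_inv M a ;; (fmap T h (idm I) ;; rho M b).
  by rewrite rho_nat -comp_assoc rho_iso2 comp_idl.
by move=> fg; rewrite (conj_rho f) (conj_rho g) fg.
Qed.

(* Kelly: as (-) (x) I is faithful, it suffices to compare both sides
   tensored with I, where the pentagon and triangle axioms apply. *)
Lemma asc_rho (m n : M) : asc M m n I ;; fmap T (idm m) (rho M n) = rho M (T m n).
Proof.
symmetry; apply: tens_unit_inj.
have tensored : fmap T (rho M (T m n)) (idm I) ;; asc M m n I
    = fmap T (asc M m n I ;; fmap T (idm m) (rho M n)) (idm I) ;; asc M m n I.
  rewrite -triangle -(fmap_id T m n) comp_assoc asc_nat -comp_assoc pentagon.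
  by rewrite !comp_assoc -fmap_compr fmap_compl comp_assoc triangle -asc_nat.
have := f_equal (fun h => h ;; asc_inv M m n I) tensored.
by rewrite !comp_assoc !asc_iso1 !comp_idr.
Qed.

Lemma rho_inv_nat (a b : M) (f : hom a b) :
  rho_inv M a ;; fmap T f (idm I) = f ;; rho_inv M b.
Proof. by apply: iso_square_inv; [apply: rho_iso2 | apply: rho_iso1 | apply: rho_nat]. Qed.

Lemma rho_inv_asc (m n : M) :
  rho_inv M (T m n) ;; asc M m n I = fmap T (idm m) (rho_inv M n).
Proof.
rewrite -[RHS]comp_idl; apply: (iso_square_inv (j := fmap T (idm m) (rho M n))).
- exact: rho_iso2.
- by rewrite -fmap_compr rho_iso1 fmap_id.
- by rewrite asc_rho comp_idr.
Qed.

Lemma RT_unit_iso_hom : TambIso (RT (MAct M) I) (HomT (MAct M)).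
Proof.
exists (fun c d h => h ;; rho M d), (fun c d h => h ;; rho_inv M d) => /=.
split; [|split; [|split]].
- by move=> c d p; rewrite comp_assoc rho_iso1 comp_idr.
- by move=> c d p; rewrite comp_assoc rho_iso2 comp_idr.
- by move=> c c' d d' f g p; rewrite !comp_assoc rho_nat.
- move=> m c d p.
  by rewrite comp_assoc -(asc_rho m d) -(comp_assoc (asc_inv M m d I)) asc_iso2
    comp_idl fmap_compr.
Qed.

Lemma LT_unit_iso_hom : TambIso (LT (MAct M) I) (HomT (MAct M)).
Proof.
exists (fun c d h => rho_inv M c ;; h), (fun c d h => rho M c ;; h) => /=.
split; [|split; [|split]].
- by move=> c d p; rewrite -comp_assoc rho_iso1 comp_idl.
- by move=> c d p; rewrite -comp_assoc rho_iso2 comp_idl.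
- by move=> c c' d d' f g p; rewrite -!comp_assoc rho_inv_nat.
- by move=> m c d p; rewrite -comp_assoc rho_inv_asc fmap_compr.
Qed.

End MonoidalLemmas.

Section Coend.
Variables (M : MonCat) (C D E : ActData M).
Variables (P : Tamb C D) (Q : Tamb D E) (R : Tamb C E).

Definition Cowedge {c : C} {e : E} {X : Type} (g : forall d, P c d -> Q d e -> X) :=
  forall d d' (h : hom d d') (p : P c d) (q : Q d' e),
    g d' (dimap P (idm c) h p) q = g d p (dimap Q h (idm e) q).

(* [(p0 r, q0 r)] is a normal form of [r], lying over the single object [d0]. *)
Lemma coend_universal_of_normal_form (phi : forall c d e, P c d -> Q d e -> R c e)
    c e (d0 : D) (p0 : R c e -> P c d0) (q0 : R c e -> Q d0 e) :
  (forall r, phi c d0 e (p0 r) (q0 r) = r) ->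
  (forall X g, @Cowedge c e X g -> forall d p q,
      g d p q = g d0 (p0 (phi c d e p q)) (q0 (phi c d e p q))) ->
  forall X (g : forall d, P c d -> Q d e -> X), Cowedge g ->
    exists k : R c e -> X,
      (forall d (p : P c d) (q : Q d e), k (phi c d e p q) = g d p q) /\
      (forall k' : R c e -> X,
          (forall d (p : P c d) (q : Q d e), k' (phi c d e p q) = g d p q) ->
          forall r, k' r = k r).
Proof.
move=> phi_normal normal_g X g cowedge_g.
exists (fun r => g d0 (p0 r) (q0 r)); split.
- by move=> d p q; rewrite -normal_g.
- by move=> k' k'_phi r; rewrite -{1}(phi_normal r) k'_phi.
Qed.

End Coend.

Arguments coend_universal_of_normal_form {M C D E P Q R} phi {c e} d0 p0 q0.

Section Representables.
Variables (M : MonCat) (C : ActData M).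
Hypothesis HC : IsActegory C.
Notation T := (tens M).
Notation A := (act C).

Lemma aasc_K (m n : M) (x : C) : aasc C m n x ;; aasc_inv C m n x = idm _.
Proof. by case: HC => _ [_ [H _]]. Qed.

Lemma aasc_inv_K (m n : M) (x : C) : aasc_inv C m n x ;; aasc C m n x = idm _.
Proof. by case: HC => _ [_ [_ [H _]]]. Qed.

Lemma aasc_nat (m m' n n' : M) (x x' : C) (f : hom m m') (g : hom n n') (h : hom x x') :
  fmap A (fmap T f g) h ;; aasc C m' n' x' = aasc C m n x ;; fmap A f (fmap A g h).
Proof. by case: HC => _ [_ [_ [_ [_ [H _]]]]]. Qed.

Lemma aasc_pentagon (m n p : M) (x : C) :
  aasc C (T m n) p x ;; aasc C m n (A p x)
  = fmap A (asc M m n p) (idm x) ;; aasc C m (T n p) x ;; fmap A (idm m) (aasc C n p x).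
Proof. by case: HC => _ [_ [_ [_ [_ [_ [H _]]]]]]. Qed.

Lemma aasc_inv_nat (m m' n n' : M) (x x' : C) (f : hom m m') (g : hom n n') (h : hom x x') :
  aasc_inv C m n x ;; fmap A (fmap T f g) h = fmap A f (fmap A g h) ;; aasc_inv C m' n' x'.
Proof. by apply: iso_square_inv; [apply: aasc_inv_K | apply: aasc_K | apply: aasc_nat]. Qed.

Lemma aasc_pentagon_asc_inv (k e m : M) (x : C) :
  aasc_inv C k (T e m) x ;; fmap A (asc_inv M k e m) (idm x) ;; aasc C (T k e) m x
  = fmap A (idm k) (aasc C e m x) ;; aasc_inv C k e (A m x).
Proof.
rewrite -[LHS]comp_idr -(aasc_K k e (A m x)) -comp_assoc !comp_assoc.
rewrite -(comp_assoc (aasc C (T k e) m x)) aasc_pentagon !comp_assoc.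
rewrite -(comp_assoc (fmap A (asc_inv M k e m) (idm x))) -fmap_compl asc_iso2 fmap_id.
by rewrite comp_idl -comp_assoc aasc_inv_K comp_idl.
Qed.

Lemma aasc_pentagon_asc (k n m : M) (x : C) :
  aasc_inv C (T k n) m x ;; fmap A (asc M k n m) (idm x) ;; aasc C k (T n m) x
  = aasc C k n (A m x) ;; fmap A (idm k) (aasc_inv C n m x).
Proof.
rewrite comp_assoc; apply: (iso_square_inv (j := fmap A (idm k) (aasc C n m x))).
- exact: aasc_inv_K.
- by rewrite -fmap_compr aasc_K fmap_id.
- by rewrite aasc_pentagon.
Qed.

Definition RT_comp_map (x : C) (m : M) c d e
    (p : RT C x c d) (q : RT (MAct M) m d e) : RT C (A m x) c e :=
  p ;; fmap A q (idm x) ;; aasc C e m x.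

Definition LT_comp_map (x : C) (m : M) n d c
    (p : LT (MAct M) m n d) (q : LT C x d c) : LT C (A m x) n c :=
  aasc_inv C n m x ;; fmap A p (idm x) ;; q.

Lemma RT_comp (x : C) (m : M) :
  TambCompIso (RT C x) (RT (MAct M) m) (RT C (A m x)).
Proof.
exists (RT_comp_map x m); rewrite /RT_comp_map.
split; [|split; [|split]] => /=.
- move=> c c' d e e' f g p q.
  by rewrite fmap_id comp_idr comp_idl fmap_compl !comp_assoc aasc_nat fmap_id.
- by move=> c d d' e h p q; rewrite comp_idl fmap_id comp_idr fmap_compl !comp_assoc.
- move=> k c d e p q.
  rewrite fmap_compl !comp_assoc -(comp_assoc (aasc_inv C k d x)) aasc_inv_nat !comp_assoc.
  rewrite -(comp_assoc (aasc_inv C k (T e m) x)) aasc_pentagon_asc_inv.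
  by rewrite !fmap_compr !comp_assoc.
- move=> c e; apply: (coend_universal_of_normal_form (RT_comp_map x m) (T e m)
    (fun r => r ;; aasc_inv C e m x) (fun _ => idm _)); rewrite /RT_comp_map /=.
  + by move=> r; rewrite fmap_id comp_idr comp_assoc aasc_inv_K comp_idr.
  + move=> X g cowedge_g d p q; rewrite comp_assoc aasc_K comp_idr.
    by have := cowedge_g d _ q p (idm _); rewrite /= comp_idl comp_idr fmap_id comp_idr => ->.
Qed.

Lemma LT_comp (x : C) (m : M) :
  TambCompIso (LT (MAct M) m) (LT C x) (LT C (A m x)).
Proof.
exists (LT_comp_map x m); rewrite /LT_comp_map.
split; [|split; [|split]] => /=.
- move=> n n' d c c' f g p q.
  rewrite comp_idr fmap_id comp_idl fmap_compl !comp_assoc.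
  by rewrite -(comp_assoc (aasc_inv C n' m x)) aasc_inv_nat fmap_id !comp_assoc.
- by move=> n d d' c h p q; rewrite fmap_id comp_idl comp_idr fmap_compl !comp_assoc.
- move=> k n d c p q.
  rewrite fmap_compl !comp_assoc -(comp_assoc (fmap A (fmap T (idm k) p) (idm x))) aasc_nat.
  by rewrite -!comp_assoc aasc_pentagon_asc !fmap_compr !comp_assoc.
- move=> n c; apply: (coend_universal_of_normal_form (LT_comp_map x m) (T n m)
    (fun _ => idm _) (fun r => aasc C n m x ;; r)); rewrite /LT_comp_map /=.
  + by move=> r; rewrite fmap_id comp_idr -comp_assoc aasc_inv_K comp_idl.
  + move=> X g cowedge_g d p q; rewrite -!comp_assoc aasc_K comp_idl.
    by have := cowedge_g _ d p (idm _) q; rewrite /= fmap_id !comp_idl comp_idr => <-.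
Qed.

End Representables.

Theorem mainTheorem1 (M : MonCat) (C : ActData M) (HC : IsActegory C) :
  (TambIso (RT (MAct M) (unitM M)) (HomT (MAct M)) /\
   TambIso (LT (MAct M) (unitM M)) (HomT (MAct M))) /\
  (forall (x : C) (m : M),
      TambCompIso (RT C x) (RT (MAct M) m) (RT C (act C m x))) /\
  (forall (x : C) (m : M),
      TambCompIso (LT (MAct M) m) (LT C x) (LT C (act C m x))).
Proof.
split; first by split; [apply: RT_unit_iso_hom | apply: LT_unit_iso_hom].
by split=> x m; [apply: RT_comp | apply: LT_comp].
Qed.
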